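(* Let $m\in\mathbb{Z}^+$ and $r\in\mathbb{Z}$ be relatively prime. Then for any $n\in\mathbb{Z}^+$ (such that $km+r\neq0$ for $0\le k\le n-1$), $$\frac1n\sum_{k=0}^{n-1}\frac1{km+r}\equiv\frac1r+\frac m2[\![2\mid n]\!]\pmod m,$$ where $[\![2\mid n]\!]$ is $1$ if $n$ is even and $0$ otherwise.
   Context: For rational numbers $u,v$, $u\equiv v\pmod m$ means that $(u-v)/m$ is a rational number whose reduced denominator is coprime to $m$. *)

From mathcomp Require Import all_boot all_order all_algebra.
Set Implicit Arguments. Unset Strict Implicit. Unset Printing Implicit Defensive.
Import Order.TTheory GRing.Theory Num.Theory.
Local Open Scope ring_scope.

(* u == v (mod m) for rationals: (u - v)/m is a rational whose reduced
   denominator is coprime to m.  (denq is the reduced denominator, > 0.) *)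
Definition rat_congr (u v : rat) (m : nat) : Prop :=
  coprime `|denq ((u - v) / m%:R)|%N m.

(* Write H(m, r, n) for the sum of 1/(km + r) over k < n and
   D(m, r, n) = (H - n/r - [2 | n] nm/2) / nm.  We show that D lies in the ring
   Z_(q) of rationals with denominator prime to q, for every q > 1 dividing m;
   this extra freedom is what makes an induction on n work.  Splitting k < ab
   into residue classes mod a gives
     D(m, r, ab) = D(m, r, a) + sum_(i < a) D(am, r + im, b) + [2 | b] floor(a/2),
   where the moduli am are still multiples of q, so only prime n = p matter.
   For odd p, the expansion 1/(r + x) = 1/r - x/r^2 + x^2/(r^2 (r + x)) with
   x = km gives D = (m/p) W - ((p - 1)/2)/r^2, where W = sum_k (k/r)^2/(r + km)
   is in Z_(q), and so is m/p whether or not p divides m.  For p = 2 one computes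
   D = -(1 + r(r + m)) / (2r(r + m)), whose numerator is even when q is. *)

From HB Require Import structures.
From mathcomp Require Import all_boot all_order all_algebra.
From mathcomp Require Import ring zify.
Set Implicit Arguments. Unset Strict Implicit. Unset Printing Implicit Defensive.
Import Order.TTheory GRing.Theory Num.Theory.
Local Open Scope ring_scope.

Definition Zloc (q : nat) : pred rat := fun x => coprime `|denq x| q.

Lemma ZlocP q x : reflect
  (exists a d : int, [/\ d != 0, coprime `|d| q & x = a%:~R / d%:~R]) (x \in Zloc q).
Proof.
apply: (iffP idP) => [xq | [a [d [d0 dq ->]]]].
  by exists (numq x), (denq x); rewrite divq_num_den.
rewrite unfold_in /Zloc; case: divqP d0 dq => // k y _ _.
by rewrite abszM coprimeMl => /andP[].
Qed.

Fact Zloc_subring_closed q : subring_closed (Zloc q).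
Proof.
split; first by rewrite unfold_in /Zloc (denq_int 1) coprime1n.
  move=> _ _ /ZlocP[a [d [d0 dq ->]]] /ZlocP[b [e [e0 eq ->]]].
  apply/ZlocP; exists (a * e + - b * d), (d * e).
  rewrite mulf_neq0 // abszM coprimeMl dq eq rmorphD !rmorphM rmorphN /=.
  by rewrite -addf_div ?intr_eq0 ?mulNr.
move=> _ _ /ZlocP[a [d [d0 dq ->]]] /ZlocP[b [e [e0 eq ->]]].
apply/ZlocP; exists (a * b), (d * e).
by rewrite mulf_neq0 // abszM coprimeMl dq eq !rmorphM /= mulf_div.
Qed.

HB.instance Definition _ q :=
  GRing.isSubringClosed.Build rat (Zloc q) (Zloc_subring_closed q).

Lemma Zloc_invz q (d : int) : coprime `|d| q -> d%:~R^-1 \in Zloc q.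
Proof.
have [-> | d0] := eqVneq d 0; first by rewrite invr0 rpred0.
by move=> dq; apply/ZlocP; exists 1, d; rewrite div1r.
Qed.

Lemma Zloc_half q (x : int) : odd q || (2 %| x)%Z -> x%:~R / 2 \in Zloc q.
Proof.
case/orP => [q_odd | /dvdzP[c ->]]; last by rewrite rmorphM /= mulfK // rpred_int.
by apply/ZlocP; exists x, 2; rewrite coprime2n.
Qed.

Lemma Zloc_div_prime q m p : prime p -> (q %| m)%N -> m%:R / p%:R \in Zloc q.
Proof.
move=> p_pr qm; have [pm | pNm] := boolP (p %| m)%N.
  by rewrite -natr_div ?rpred_nat // unitfE pnatr_eq0 -lt0n prime_gt0.
rewrite rpredM ?rpred_nat // (@Zloc_invz q p) // prime_coprime //.
by apply: contra pNm => /dvdn_trans; apply.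
Qed.

Lemma sumr_ord_mul (V : nmodType) (F : nat -> V) a b :
  \sum_(k < a * b) F k = \sum_(i < a) \sum_(t < b) F (i + a * t)%N.
Proof.
elim: b => [|b IHb]; first by rewrite muln0 big_ord0 big1 // => i _; rewrite big_ord0.
rewrite mulnSr big_split_ord /= IHb.
under [in RHS]eq_bigr => i _ do rewrite big_ord_recr /=.
by rewrite big_split /=; congr (_ + _); apply: eq_bigr => i _; rewrite addnC.
Qed.

Definition harm (m : nat) (r : int) (n : nat) : rat :=
  \sum_(k < n) ((k%:Z * m%:Z + r)%:~R)^-1.

Definition harm_defect (m : nat) (r : int) (n : nat) : rat :=
  (harm m r n - n%:R / r%:~R - (~~ odd n)%:R * (n * m)%:R / 2) / (n * m)%:R.

Lemma harm_defectE m r n : (0 < m)%N -> (0 < n)%N ->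
  harm m r n = n%:R / r%:~R + (~~ odd n)%:R * (n * m)%:R / 2
               + (n * m)%:R * harm_defect m r n.
Proof.
move=> m0 n0; rewrite /harm_defect [(n * m)%:R * _]mulrC divfK; first by ring.
by rewrite pnatr_eq0 -lt0n muln_gt0 n0.
Qed.

Lemma harm_defect1 m r : harm_defect m r 1 = 0.
Proof. by rewrite /harm_defect /harm big_ord1 mul0r add0r mul1r subrr /= !mul0r. Qed.

Lemma harm_mul m r a b :
  harm m r (a * b) = \sum_(i < a) harm (a * m) (r + i%:Z * m%:Z) b.
Proof.
rewrite /harm (sumr_ord_mul (fun k : nat => ((k%:Z * m%:Z + r)%:~R)^-1)).
apply: eq_bigr => i _; apply: eq_bigr => t _.
by congr ((_)%:~R^-1); rewrite !PoszD !PoszM; ring.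
Qed.

Lemma harm_defect_mul m r a b : (0 < m)%N -> (0 < a)%N -> (0 < b)%N ->
  harm_defect m r (a * b) = harm_defect m r a
    + \sum_(i < a) harm_defect (a * m) (r + i%:Z * m%:Z) b
    + (~~ odd b)%:R * (a./2)%:R.
Proof.
move=> m0 a0 b0; rewrite {1}/harm_defect harm_mul.
under eq_bigr => i _ do rewrite harm_defectE ?muln_gt0 ?a0 //.
rewrite !big_split /= sumr_const card_ord -[_ *+ a]mulr_natr -!mulr_sumr.
have -> : \sum_(i < a) ((r + i%:Z * m%:Z)%:~R)^-1 = harm m r a.
  by apply: eq_bigr => i _; rewrite addrC.
rewrite (@harm_defectE m r a m0 a0) oddM.
have half_a : (a./2)%:R = (a%:R - (odd a)%:R) / 2 :> rat.
  by rewrite -{2}(odd_double_half a) natrD -muln2 natrM addrC addKr mulfK.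
rewrite half_a !natrM; set R := (r%:~R)^-1.
by case: (odd a); case: (odd b) => /=; field; rewrite !pnatr_eq0 -!lt0n m0 a0 b0.
Qed.

Lemma harm_defect_odd m r n : odd n -> (0 < m)%N -> r != 0 ->
  (forall k, (k < n)%N -> k%:Z * m%:Z + r != 0) ->
  harm_defect m r n =
    m%:R / n%:R * \sum_(k < n) (k%:R / r%:~R) ^+ 2 / (k%:Z * m%:Z + r)%:~R
    - (n./2)%:R * r%:~R^-1 ^+ 2.
Proof.
move=> n_odd m0 r0 kmr0.
have r0' : r%:~R != 0 :> rat by rewrite intr_eq0.
have taylor (k : 'I_n) : ((k%:Z * m%:Z + r)%:~R : rat)^-1 = r%:~R^-1
    - k%:R * m%:R / r%:~R ^+ 2 + m%:R ^+ 2 * ((k%:R / r%:~R) ^+ 2 / (k%:Z * m%:Z + r)%:~R).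
  have := kmr0 k (ltn_ord k); rewrite -(intr_eq0 rat) rmorphD rmorphM /= => kmr0'.
  by field; rewrite r0' andbT.
have sum_id : \sum_(k < n) (k%:R : rat) = (n * n./2)%:R.
  rewrite -natr_sum -(big_mkord xpredT (fun k => k)) bin2_sum bin2odd //.
  by congr (n * _)%:R; lia.
rewrite /harm_defect /harm (eq_bigr _ (fun k _ => taylor k)) !big_split /=.
rewrite sumrN sumr_const card_ord -!mulr_suml -mulr_sumr sum_id n_odd /=.
by rewrite !natrM; field; rewrite r0' !pnatr_eq0 -!lt0n m0 odd_gt0.
Qed.

Lemma harm_defect2 m r : (0 < m)%N -> r != 0 -> m%:Z + r != 0 ->
  harm_defect m r 2 = (- (1 + r * (m%:Z + r)))%:~R / 2 / (r * (m%:Z + r))%:~R.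
Proof.
rewrite -!(intr_eq0 rat) rmorphD => m0 r0 mr0.
rewrite /harm_defect /harm !big_ord_recr big_ord0 /= !rmorphN !rmorphD !rmorphM /=.
by field; apply/and3P; split => //; rewrite -natrD pnatr_eq0 -lt0n addn_gt0 m0.
Qed.

Lemma coprime_shift q m r k : (q %| m)%N -> coprime `|r| q ->
  coprime `|k%:Z * m%:Z + r| q.
Proof.
case/dvdnP=> c ->; rewrite !(coprime_sym _ q) => qr.
by rewrite -[coprime _ _]/(coprimez q _) /coprimez PoszM mulrA gcdzMDl.
Qed.

Section Localization.

Variable q : nat.
Hypothesis q_gt1 : (1 < q)%N.

Lemma coprime_neq0 (x : int) : coprime `|x| q -> x != 0.
Proof. by apply: contraTneq => ->; rewrite /coprime gcd0n gtn_eqF. Qed.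

Lemma harm_defect2_Zloc m r : (0 < m)%N -> (q %| m)%N -> coprime `|r| q ->
  harm_defect m r 2 \in Zloc q.
Proof.
move=> m0 qm qr; have qmr := coprime_shift 1 qm qr; rewrite mul1r in qmr.
rewrite harm_defect2 ?coprime_neq0 // rpredM ?Zloc_invz //; last first.
  by rewrite abszM coprimeMl qr.
apply: Zloc_half; have [// | q_even] := boolP (odd q); rewrite /=.
have r_odd : odd `|r|%N.
  by rewrite -coprimen2 (coprime_dvdr _ qr) // dvdn2 q_even.
have m_even : (2 %| m%:Z)%Z by apply: dvdn_trans qm; rewrite dvdn2 q_even.
have [s ->] : exists s, r = 2 * s + 1 by exists (r %/ 2)%Z; lia.
case/dvdzP: m_even => t ->; apply/dvdzP.
by exists (- (2 * s * t + 2 * s ^+ 2 + 2 * s + t + 1)); ring.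
Qed.

Lemma harm_defect_prime_Zloc p m r : prime p -> (0 < m)%N -> (q %| m)%N ->
  coprime `|r| q -> harm_defect m r p \in Zloc q.
Proof.
move=> p_pr m0 qm qr; have [-> | p_odd] := even_prime p_pr.
  exact: harm_defect2_Zloc.
have qkmr k := coprime_shift k qm qr.
have Zr : r%:~R^-1 \in Zloc q := Zloc_invz qr.
rewrite harm_defect_odd ?coprime_neq0 //; last by move=> k _; apply: coprime_neq0.
apply: rpredB; last by rewrite rpredM ?rpred_nat ?rpredX.
rewrite rpredM ?Zloc_div_prime //; apply: rpred_sum => k _.
by rewrite !rpredM ?rpredX ?rpred_nat ?Zloc_invz.
Qed.

Lemma harm_defect_Zloc n m r : (0 < n)%N -> (0 < m)%N -> (q %| m)%N ->
  coprime `|r| q -> harm_defect m r n \in Zloc q.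
Proof.
elim/ltn_ind: n m r => n IHn m r n0 m0 qm qr.
have [n_le1 | n_gt1] := leqP n 1.
  by rewrite (_ : n = 1%N) ?harm_defect1 ?rpred0; lia.
set p := pdiv n; set b := (n %/ p)%N; have p_pr : prime p := pdiv_prime n_gt1.
have -> : n = (p * b)%N by rewrite mulnC divnK // pdiv_dvd.
have b0 : (0 < b)%N by rewrite divn_gt0 ?prime_gt0 // dvdn_leq ?pdiv_dvd.
have p0 := prime_gt0 p_pr.
rewrite harm_defect_mul //; apply: rpredD; last by rewrite rpredM ?rpred_nat.
apply: rpredD; first exact: harm_defect_prime_Zloc.
apply: rpred_sum => i _; apply: IHn; rewrite ?muln_gt0 ?p0 ?dvdn_mull //.
  exact: ltn_Pdiv (prime_gt1 p_pr) n0.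
by rewrite addrC coprime_shift.
Qed.

End Localization.

Theorem lemma3p1 (m : nat) (r : int) (n : nat)
  (hm : (0 < m)%N) (hcop : coprime m `|r|%N) (hn : (0 < n)%N)
  (hnz : forall k : nat, (k < n)%N -> (k%:Z * m%:Z + r) != 0) :
  rat_congr
    ((n%:R)^-1 * \sum_(k < n) ((k%:Z * m%:Z + r)%:~R : rat)^-1)
    ((r%:~R : rat)^-1 + (m%:R / 2%:R) * (if ~~ odd n then 1 else 0))
    m.
Proof.
(* [hnz] is redundant: for m > 1 it follows from [hcop] (see [coprime_neq0]). *)
have [m_le1 | m_gt1] := leqP m 1.
  by rewrite /rat_congr (_ : m = 1%N) ?coprimen1; lia.
rewrite coprime_sym in hcop.
rewrite /rat_congr (_ : (_ - _) / _ = harm_defect m r n).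
  exact: harm_defect_Zloc.
rewrite /harm_defect -/(harm m r n) natrM; set R := (r%:~R)^-1.
by case: (odd n) => /=; field; rewrite !pnatr_eq0 -!lt0n hm hn.
Qed.
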